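(* Let $\widehat{V}_2(\mathbf{A};\mathbf{Y}) = \frac{\hat\sigma^2}{n}\Big[1+\frac1n\sum_{i=1}^n\sum_{j=1}^n\mathbf{A}_{ij}\Big]$. Under the asymptotic scaling assumption and the homoskedasticity assumption $\mathrm{var}(X_i)=\mathrm{var}(X_j)$ for all $i,j\in\mathcal{V}$, for every $\epsilon>0$, \[\lim_{n\to\infty}\Pr\big(n\,\mathrm{var}(\overline{X}) - n\widehat{V}_2(\mathbf{A}^\circ;\mathbf{Y})>\epsilon\big)=0.\]
   Context: Setting: $\mathcal{G}=(\mathcal{V},\mathcal{E})$ is a simple undirected graph with a real random variable $X_i$ attached to each vertex $i$. $\mathcal{G}$ is a dependency graph: for all disjoint $\mathcal{V}_1,\mathcal{V}_2\subset\mathcal{V}$ such that no edge of $\mathcal{E}$ joins a vertex of $\mathcal{V}_1$ to a vertex of $\mathcal{V}_2$, $\{X_i:i\in\mathcal{V}_1\}$ is independent of $\{X_j:j\in\mathcal{V}_2\}$. A subset $\mathcal{V}_S\subseteq\mathcal{V}$ with $|\mathcal{V}_S|=n$ is observed, labeled $1,\dots,n$. $\mathcal{G}_S=(\mathcal{V}_S,\mathcal{E}_S)$ is the induced subgraph on $\mathcal{V}_S$, with $n\times n$ adjacency matrix $\mathbf{A}^\circ$ (0-1, symmetric, zero diagonal). $\mathcal{G}_R=(\mathcal{V}_S,\mathcal{E}_R)$ is a subgraph with $\mathcal{E}_R\subseteq\mathcal{E}_S$; $d_i$ is the degree of $i\in\mathcal{V}_S$ in $\mathcal{G}$; $\mathbf{Y}=((X_1,\dots,X_n),(d_1,\dots,d_n),\mathcal{G}_R)$.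 Let $\mu=\frac1n\sum_{i=1}^n \mathrm{E}[X_i]$, $\overline{X}=\frac1n\sum_i X_i$, $\hat\sigma^2=\frac1n\sum_i(X_i-\overline{X})^2$. Asymptotic scaling assumption: a sequence, indexed by $n\to\infty$, of such settings (nested graphs with $|\mathcal{V}|=N_n\ge n$, $|\mathcal{V}_S|=n$), with finite positive constants $c_1,c_2,c_3$ independent of $n$ such that: $\Pr(|X_i-\mu|>c_1)=0$ for all $i\in\mathcal{V}_S$; $\sum_{j}\mathbf{A}^\circ_{ij}\le c_2$ for all $i\in\mathcal{V}_S$; and $\lim_{n\to\infty} n\,\mathrm{var}(\overline{X})=c_3$. *)

From HB Require Import structures.
From mathcomp Require Import all_boot all_order all_algebra.
From mathcomp Require Import all_classical all_reals all_analysis.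
Set Implicit Arguments. Unset Strict Implicit. Unset Printing Implicit Defensive.
Import Order.TTheory GRing.Theory Num.Theory.
Import numFieldNormedType.Exports.
Local Open Scope classical_set_scope.
Local Open Scope ring_scope.

(* The n observed vertices V_S are labelled 1..n (here
   0..n-1) through an injective labelling lab : 'I_n -> nat. *)

Definition gen_sigma d (T : measurableType d) (R : realType)
  (X : nat -> T -> R) (V : set nat) : set (set T) :=
  <<s [set A | exists i (C : set R), [/\ V i, measurable C & A = X i @^-1` C]] >>.

Definition indep_fam d (T : measurableType d) (R : realType)
  (P : probability T R) (X : nat -> T -> R) (V1 V2 : set nat) : Prop :=
  forall A B, gen_sigma X V1 A -> gen_sigma X V2 B ->
    P (A `&` B) = (P A * P B)%E.

Definition simple_graph (V : set nat) (E : rel nat) : Prop :=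
  [/\ forall i j, E i j -> E j i, forall i, ~~ E i i &
      forall i j, E i j -> V i /\ V j].

Definition dependency_graph d (T : measurableType d) (R : realType)
  (P : probability T R) (X : nat -> T -> R) (V : set nat) (E : rel nat) : Prop :=
  forall V1 V2 : set nat, V1 `<=` V -> V2 `<=` V -> V1 `&` V2 = set0 ->
    (forall i j, V1 i -> V2 j -> ~~ E i j) -> indep_fam P X V1 V2.

Definition adjmx (R : realType) (n : nat) (E : rel nat) (lab : 'I_n -> nat)
  : 'M[R]_n := \matrix_(i, j) (E (lab i) (lab j))%:R.

Definition mean_mu d (T : measurableType d) (R : realType) (P : probability T R)
  (n : nat) (X : nat -> T -> R) (lab : 'I_n -> nat) : R :=
  n%:R^-1 * \sum_(i < n) fine ('E_P[X (lab i)]).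

Definition Xbar d (T : measurableType d) (R : realType)
  (n : nat) (X : nat -> T -> R) (lab : 'I_n -> nat) : T -> R :=
  fun w => n%:R^-1 * \sum_(i < n) X (lab i) w.
Arguments Xbar {d T R} n X lab.

Definition sigma2_hat d (T : measurableType d) (R : realType)
  (n : nat) (X : nat -> T -> R) (lab : 'I_n -> nat) : T -> R :=
  fun w => n%:R^-1 * \sum_(i < n) (X (lab i) w - Xbar n X lab w) ^+ 2.
Arguments sigma2_hat {d T R} n X lab.

Definition V2_hat d (T : measurableType d) (R : realType)
  (n : nat) (X : nat -> T -> R) (lab : 'I_n -> nat) (A : 'M[R]_n) : T -> R :=
  fun w => sigma2_hat n X lab w / n%:R *
           (1 + n%:R^-1 * \sum_(i < n) \sum_(j < n) A i j).
Arguments V2_hat {d T R} n X lab A.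
Arguments adjmx R n E lab.
Arguments mean_mu {d T R} P n X lab.

From HB Require Import structures.
From mathcomp Require Import all_boot all_order all_algebra.
From mathcomp Require Import all_classical all_reals all_analysis.
From mathcomp Require Import measurable_realfun zify ring lra.
Set Implicit Arguments. Unset Strict Implicit. Unset Printing Implicit Defensive.
Import Order.TTheory GRing.Theory Num.Theory.
Import numFieldNormedType.Exports.
Local Open Scope classical_set_scope.
Local Open Scope ring_scope.

(* Off a null set the summands are X_i - mu = Z_i with |Z_i| <= c1.  Writing
   Zbar = (1/n) sum_i Z_i and Q = (1/n) sum_i Z_i^2, one has
   sigma_hat^2 = Q - Zbar^2, hence n V2_hat = (Q - Zbar^2) D with
   D = 1 + (1/n) sum_ij A_ij <= 1 + c2.  In the dependency graph only adjacent
   or equal vertices correlate, so for centred bounded functions g_i of X_i,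
   E (sum_i g_i)^2 <= b (n + sum_ij A_ij) when every E g_i g_j <= b; by
   homoskedasticity and AM-GM this gives n var(Xbar) = n E Zbar^2 <= sigma^2 D
   <= E[Q] D, together with E Zbar^2 = O(1/n) and var(Q) = O(1/n).  So the gap
   n var(Xbar) - n V2_hat exceeds eps only if Zbar^2 or |Q - E Q| is of order
   eps, an event of probability O(1/n) by Markov's inequality.
   Independence of non-adjacent summands is only available on preimages, and
   is transferred to expectations of products by approximating bounded
   measurable functions with simple functions. *)

Section bounded_expectation.
Context d (T : measurableType d) (R : realType) (P : probability T R).

Definition bounded_mfun (f : T -> R) :=
  measurable_fun setT f /\ exists M : R, forall x, `|f x| <= M.

Definition expectr (f : T -> R) : R := fine ('E_P[f])%E.

Lemma bounded_mfun_Lfun1 f : bounded_mfun f -> f \in Lfun P 1.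
Proof.
move=> [mf [M fM]]; apply/Lfun1_integrable.
apply: measurable_bounded_integrable => //.
  exact: le_lt_trans (probability_le1 P measurableT) (ltry 1).
exists M; split; first exact: num_real.
by move=> y My x _; exact: le_trans (fM x) (ltW My).
Qed.

Lemma expectrE f : bounded_mfun f -> ('E_P[f] = (expectr f)%:E)%E.
Proof. by move=> bf; rewrite fineK// expectation_fin_num// bounded_mfun_Lfun1. Qed.

Lemma bounded_mfun_cst c : bounded_mfun (cst c).
Proof. by split => //; exists `|c|. Qed.

Lemma bounded_mfunD f g :
  bounded_mfun f -> bounded_mfun g -> bounded_mfun (fun x => f x + g x).
Proof.
move=> [mf [M fM]] [mg [N gN]]; split; first exact: measurable_funD.
by exists (M + N) => x; exact: le_trans (ler_normD _ _) (lerD (fM x) (gN x)).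
Qed.

Lemma bounded_mfunM f g :
  bounded_mfun f -> bounded_mfun g -> bounded_mfun (fun x => f x * g x).
Proof.
move=> [mf [M fM]] [mg [N gN]]; split; first exact: measurable_funM.
by exists (M * N) => x; rewrite normrM; exact: ler_pM.
Qed.

Lemma bounded_mfunZ k f : bounded_mfun f -> bounded_mfun (fun x => k * f x).
Proof. exact/bounded_mfunM/bounded_mfun_cst. Qed.

Lemma bounded_mfunB f g :
  bounded_mfun f -> bounded_mfun g -> bounded_mfun (fun x => f x - g x).
Proof.
move=> bf /(bounded_mfunZ (-1)) bg.
by under eq_fun do rewrite -mulN1r; exact: bounded_mfunD.
Qed.

Lemma bounded_mfun_sum (I : Type) (s : seq I) (F : I -> T -> R) :
  (forall i, bounded_mfun (F i)) -> bounded_mfun (fun x => \sum_(i <- s) F i x).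
Proof.
move=> bF; elim: s => [|i s IH].
  by under eq_fun do rewrite big_nil; exact: bounded_mfun_cst.
by under eq_fun do rewrite big_cons; exact: bounded_mfunD.
Qed.

Lemma bounded_mfun_comp (X : T -> R) (g : R -> R) M :
  measurable_fun setT X -> measurable_fun setT g -> (forall y, `|g y| <= M) ->
  bounded_mfun (g \o X).
Proof. by move=> mX mg gM; split; [exact: measurableT_comp | exists M => x; exact: gM]. Qed.

Lemma bounded_mfun_indic (A : set T) : measurable A -> bounded_mfun (\1_A).
Proof.
move=> mA; split; first exact: measurable_indic.
by exists 1 => x; rewrite indicE; case: (x \in A); rewrite ?normr1 ?normr0.
Qed.

Lemma expectr_cst c : expectr (cst c) = c.
Proof. by rewrite /expectr expectation_cst. Qed.

Lemma expectr_indic (A : set T) : measurable A -> expectr (\1_A) = fine (P A).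
Proof. by move=> mA; rewrite /expectr expectation_indic. Qed.

Lemma expectrD f g : bounded_mfun f -> bounded_mfun g ->
  expectr (fun x => f x + g x) = expectr f + expectr g.
Proof.
move=> bf bg; rewrite /expectr.
by rewrite (expectationD (bounded_mfun_Lfun1 bf) (bounded_mfun_Lfun1 bg)) !expectrE.
Qed.

Lemma expectrZ k f : bounded_mfun f -> expectr (fun x => k * f x) = k * expectr f.
Proof.
move=> bf; rewrite /expectr.
have -> : (fun x => k * f x) = (k \o* f)%R by apply/funext => x /=; rewrite mulrC.
by rewrite (expectationZl k (bounded_mfun_Lfun1 bf)) expectrE.
Qed.

Lemma expectrB f g : bounded_mfun f -> bounded_mfun g ->
  expectr (fun x => f x - g x) = expectr f - expectr g.
Proof.
move=> bf bg; have bNg := bounded_mfunZ (-1) bg.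
under eq_fun do rewrite -mulN1r.
by rewrite expectrD // expectrZ // mulN1r.
Qed.

Lemma expectr_sum (I : Type) (s : seq I) (F : I -> T -> R) :
  (forall i, bounded_mfun (F i)) ->
  expectr (fun x => \sum_(i <- s) F i x) = \sum_(i <- s) expectr (F i).
Proof.
move=> bF; elim: s => [|i s IH].
  by under eq_fun do rewrite big_nil; rewrite big_nil expectr_cst.
under eq_fun do rewrite big_cons.
by rewrite expectrD ?big_cons ?IH //; exact: bounded_mfun_sum.
Qed.

Lemma expectr_ge0 f : bounded_mfun f -> (forall x, 0 <= f x) -> 0 <= expectr f.
Proof. by move=> bf f0; rewrite fine_ge0 // expectation_ge0. Qed.

Lemma ler_expectr f g : bounded_mfun f -> bounded_mfun g ->
  (forall x, f x <= g x) -> expectr f <= expectr g.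
Proof.
move=> bf bg fg; rewrite -subr_ge0 -expectrB //.
by apply: expectr_ge0 => [|x]; [exact: bounded_mfunB | rewrite subr_ge0].
Qed.

Lemma expectr_norm_le f B : bounded_mfun f -> (forall x, `|f x| <= B) ->
  `|expectr f| <= B.
Proof.
move=> bf fB; have fB' x : - B <= f x <= B by rewrite -ler_norml.
rewrite ler_norml -[X in X <= _ <= _](expectr_cst (- B)) -[X in _ <= _ <= X](expectr_cst B).
apply/andP; split; apply: ler_expectr => //; try exact: bounded_mfun_cst.
  by move=> x; case/andP: (fB' x).
by move=> x; case/andP: (fB' x).
Qed.

Lemma expectation_ae_expectr (f g : T -> R) (N : set T) :
  measurable N -> P N = 0%E -> measurable_fun setT f -> bounded_mfun g ->
  (forall x, ~ N x -> f x = g x) -> ('E_P[f] = (expectr g)%:E)%E.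
Proof.
move=> mN PN mf bg fg; rewrite -expectrE // !unlock.
apply: ae_eq_integral => //; [exact/measurable_EFinP | | ].
  by apply/measurable_EFinP; case: bg.
exists N; split => // x /= fgx; apply: contrapT => Nx.
by apply: fgx => _; rewrite fg.
Qed.

Lemma measurable_superlevel (F : T -> R) (a : R) :
  measurable_fun setT F -> measurable [set x | a < F x].
Proof.
move=> mF; have := mF measurableT _ (measurable_itv `]a, +oo[).
by rewrite setTI; congr measurable; apply/seteqP; split => y /=; rewrite in_itv /= andbT.
Qed.

Lemma markov_expectr (F : T -> R) (a : R) : bounded_mfun F -> 0 < a ->
  (forall x, 0 <= F x) -> (P [set x | (a < F x)%R] <= (expectr F / a)%:E)%E.
Proof.
move=> bF a0 F0; set A := [set x | a < F x].
have mA : measurable A by apply: measurable_superlevel; case: bF.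
rewrite -(fineK (fin_num_measure P _ mA)) lee_fin ler_pdivlMr // mulrC.
rewrite -expectr_indic // -expectrZ; last exact: bounded_mfun_indic.
apply: ler_expectr => //; first exact/bounded_mfunZ/bounded_mfun_indic.
move=> x; rewrite indicE; case: (boolP (x \in A)) => xA; last by rewrite mulr0.
by rewrite mulr1; move: xA; rewrite inE => /ltW.
Qed.

End bounded_expectation.

Section quantization.
Context (R : realType).

Definition level (N : nat) (m : int) : set R :=
  [set y | m%:~R <= y * N%:R < (m + 1)%:~R].

Lemma measurable_level N m : measurable (level N m).
Proof.
have mN : measurable_fun setT (fun y : R => y * N%:R) by exact: measurable_funM.
have := mN measurableT _ (measurable_itv `[m%:~R, (m + 1)%:~R[).
by rewrite setTI; congr measurable; apply/seteqP; split => y /=; rewrite in_itv.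
Qed.

Definition levels (L : nat) : seq int := [seq i%:Z - L%:Z | i <- iota 0 (2 * L)].

Lemma levels_uniq L : uniq (levels L).
Proof. by rewrite map_inj_uniq ?iota_uniq // => i j /addIr []. Qed.

Lemma mem_levels L (m : int) : - (L%:Z) <= m -> m < L%:Z -> m \in levels L.
Proof.
move=> Lm mL; apply/mapP; exists (absz (m + L%:Z)); last by lia.
by rewrite mem_iota; lia.
Qed.

(* [floor (U x * N) / N], written as a simple function when [|U x * N| < L]. *)
Definition quantize (T : Type) (U : T -> R) (N L : nat) (x : T) : R :=
  \sum_(m <- levels L) (m%:~R / N%:R) * \1_(U @^-1` level N m) x.

Lemma quantizeE (T : Type) (U : T -> R) N L x : `|U x * N%:R| < L%:R ->
  quantize U N L x = (Num.floor (U x * N%:R))%:~R / N%:R.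
Proof.
move=> UL; set m0 := Num.floor (U x * N%:R).
have m0L : m0 \in levels L.
  move: UL; rewrite ltr_norml => /andP[LU UL].
  by apply: mem_levels; rewrite ?floor_ge_int ?floor_lt_int // intrN ltW.
rewrite /quantize (bigD1_seq m0 m0L (levels_uniq L)) /= big1 ?addr0.
  by rewrite indicE mem_set ?mulr1 //; exact: floor_itv.
move=> m m0m; rewrite indicE memNset ?mulr0 //= /level /=.
by rewrite -floor_eq eq_sym; apply/negP.
Qed.

Lemma quantize_err (T : Type) (U : T -> R) N L x : (0 < N)%N ->
  `|U x * N%:R| < L%:R -> `|U x - quantize U N L x| <= N%:R^-1.
Proof.
move=> N0 UL; rewrite quantizeE //.
have /andP[leU ltU] := floor_itv (U x * N%:R).
have N0' : 0 < N%:R :> R by rewrite ltr0n.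
have -> : U x - (Num.floor (U x * N%:R))%:~R / N%:R
    = (U x * N%:R - (Num.floor (U x * N%:R))%:~R) / N%:R.
  by rewrite mulrBl mulfK // gt_eqF.
rewrite normrM normfV (gtr0_norm N0') -[X in _ <= X]mul1r ler_pM2r ?invr_gt0 //.
by rewrite ger0_norm ?subr_ge0 //; move: ltU; rewrite intrD; lra.
Qed.

End quantization.

Lemma norm_mulB_le (R : numDomainType) (a a' b b' e M M' : R) :
  `|a - a'| <= e -> `|b - b'| <= e -> `|b| <= M -> `|a'| <= M' ->
  `|a * b - a' * b'| <= e * M + M' * e.
Proof.
move=> aa' bb' bM a'M.
have -> : a * b - a' * b' = (a - a') * b + a' * (b - b') by ring.
by apply: le_trans (ler_normD _ _) _; rewrite !normrM lerD ?ler_pM.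
Qed.

Lemma norm_le_divn_eq0 (R : realType) (x C : R) :
  (forall N : nat, (0 < N)%N -> `|x| <= C / N%:R) -> x = 0.
Proof.
move=> xC; apply/eqP; apply: contraT => x0.
have x0' : 0 < `|x| by rewrite normr_gt0.
set N := (Num.truncn (C / `|x|)).+1.
have N0 : 0 < N%:R :> R by rewrite ltr0n.
have := truncnS_gt (C / `|x|); rewrite -/N ltr_pdivrMr // => CN.
have := xC N isT; rewrite ler_pdivlMr // => xNC.
by have := le_lt_trans xNC CN; rewrite mulrC ltxx.
Qed.

Section independence.
Context d (T : measurableType d) (R : realType) (P : probability T R).

Definition indep_fun (U W : T -> R) := forall C D : set R,
  measurable C -> measurable D ->
  P (U @^-1` C `&` W @^-1` D) = (P (U @^-1` C) * P (W @^-1` D))%E.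

Lemma measurable_preimage_level (U : T -> R) N m :
  measurable_fun setT U -> measurable (U @^-1` level N m).
Proof. by move=> mU; have := mU measurableT _ (measurable_level N m); rewrite setTI. Qed.

Lemma bounded_mfun_quantize (U : T -> R) N L :
  measurable_fun setT U -> bounded_mfun (quantize U N L).
Proof.
move=> mU; apply: bounded_mfun_sum => m.
exact/bounded_mfunZ/bounded_mfun_indic/measurable_preimage_level.
Qed.

Lemma expectr_quantize (U : T -> R) N L : measurable_fun setT U ->
  expectr P (quantize U N L) =
  \sum_(m <- levels L) (m%:~R / N%:R) * fine (P (U @^-1` level N m)).
Proof.
move=> mU; have mUl m := measurable_preimage_level N m mU.
rewrite expectr_sum => [|m]; last exact/bounded_mfunZ/bounded_mfun_indic.
by apply: eq_bigr => m _; rewrite expectrZ ?expectr_indic //; exact: bounded_mfun_indic.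
Qed.

Lemma expectr_quantizeM (U W : T -> R) N L :
  measurable_fun setT U -> measurable_fun setT W -> indep_fun U W ->
  expectr P (fun x => quantize U N L x * quantize W N L x) =
  expectr P (quantize U N L) * expectr P (quantize W N L).
Proof.
move=> mU mW UW; have mUl m := measurable_preimage_level N m mU.
have mWl m := measurable_preimage_level N m mW.
have mUWl m l := measurableI _ _ (mUl m) (mWl l).
rewrite !expectr_quantize // big_distrl /=.
have -> : (fun x => quantize U N L x * quantize W N L x) =
    (fun x => \sum_(m <- levels L) \sum_(l <- levels L)
      (m%:~R / N%:R) * (l%:~R / N%:R) *
      \1_(U @^-1` level N m `&` W @^-1` level N l) x).
  apply/funext => x; rewrite /quantize big_distrl; apply: eq_bigr => m _.
  by rewrite big_distrr; apply: eq_bigr => l _; rewrite indicI /= mulrACA.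
rewrite expectr_sum => [|m]; last first.
  by apply: bounded_mfun_sum => l; exact/bounded_mfunZ/bounded_mfun_indic.
apply: eq_bigr => m _; rewrite big_distrr expectr_sum => [|l]; last first.
  exact/bounded_mfunZ/bounded_mfun_indic.
apply: eq_bigr => l _; rewrite expectrZ ?expectr_indic //; last first.
  exact: bounded_mfun_indic.
rewrite (UW _ _ (measurable_level N m) (measurable_level N l)).
by rewrite fineM ?fin_num_measure // mulrACA.
Qed.

(* Approximate [U] and [W] by quantizations with mesh [1/N] and let [N] grow. *)
Lemma expectr_indepM (U W : T -> R) : bounded_mfun U -> bounded_mfun W ->
  indep_fun U W -> expectr P (fun x => U x * W x) = expectr P U * expectr P W.
Proof.
move=> bU bW UW; have [[mU [MU UMU]] [mW [MW WMW]]] := (bU, bW).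
set B := MU + MW.
have MU0 : 0 <= MU := le_trans (normr_ge0 _) (UMU point).
have MW0 : 0 <= MW := le_trans (normr_ge0 _) (WMW point).
have UB x : `|U x| <= B by apply: le_trans (UMU x) _; rewrite lerDl.
have WB x : `|W x| <= B by apply: le_trans (WMW x) _; rewrite lerDr.
apply/eqP; rewrite -subr_eq0; apply/eqP.
apply: (@norm_le_divn_eq0 _ _ (2 * (2 * B + 1))) => N N0.
have N0' : 0 < N%:R :> R by rewrite ltr0n.
set L := (Num.truncn (B * N%:R)).+1.
have lt_L y : `|y| <= B -> `|y * N%:R| < L%:R.
  move=> yB; apply: le_lt_trans (truncnS_gt _).
  by rewrite normrM (ger0_norm (ltW N0')) ler_pM2r.
set U' := quantize U N L; set W' := quantize W N L.
have errU x : `|U x - U' x| <= N%:R^-1 by exact/quantize_err/lt_L/UB.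
have errW x : `|W x - W' x| <= N%:R^-1 by exact/quantize_err/lt_L/WB.
have U'B x : `|U' x| <= B + 1.
  have -> : U' x = U x - (U x - U' x) by ring.
  apply: le_trans (ler_normB _ _) (lerD (UB x) (le_trans (errU x) _)).
  by rewrite invf_le1 // ler1n.
have bU' : bounded_mfun U' by exact: bounded_mfun_quantize.
have bW' : bounded_mfun W' by exact: bounded_mfun_quantize.
have errUW : `|expectr P (fun x => U x * W x) - expectr P (fun x => U' x * W' x)|
    <= N%:R^-1 * B + (B + 1) * N%:R^-1.
  rewrite -expectrB; [|exact: bounded_mfunM..].
  apply: expectr_norm_le => [|x]; last exact: norm_mulB_le.
  by apply: bounded_mfunB; exact: bounded_mfunM.
have errEUW : `|expectr P U * expectr P W - expectr P U' * expectr P W'|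
    <= N%:R^-1 * B + (B + 1) * N%:R^-1.
  apply: norm_mulB_le; last 2 first.
  - exact: expectr_norm_le.
  - exact: expectr_norm_le.
  - by rewrite -expectrB //; apply: expectr_norm_le => //; exact: bounded_mfunB.
  - by rewrite -expectrB //; apply: expectr_norm_le => //; exact: bounded_mfunB.
have -> : expectr P (fun x => U x * W x) - expectr P U * expectr P W =
    (expectr P (fun x => U x * W x) - expectr P (fun x => U' x * W' x)) -
    (expectr P U * expectr P W - expectr P U' * expectr P W').
  by rewrite expectr_quantizeM //; ring.
apply: le_trans (ler_normB _ _) _.
have -> : 2 * (2 * B + 1) / N%:R = 2 * (N%:R^-1 * B + (B + 1) * N%:R^-1).
  by field; rewrite gt_eqF.
by rewrite mulr2n mulrDl !mul1r lerD.
Qed.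

End independence.

Lemma expectr_sqr_sum_le d (T : measurableType d) (R : realType)
    (P : probability T R) n (G : 'I_n -> T -> R) (A : 'I_n -> 'I_n -> R) b :
  (forall i, bounded_mfun (G i)) ->
  (forall i j, expectr P (fun x => G i x * G j x) <= b * ((i == j)%:R + A i j)) ->
  expectr P (fun x => (\sum_i G i x) ^+ 2) <= b * (n%:R + \sum_i \sum_j A i j).
Proof.
move=> bG GG.
have -> : (fun x => (\sum_i G i x) ^+ 2) = (fun x => \sum_i \sum_j G i x * G j x).
  by apply/funext => x; rewrite expr2 big_distrl; apply: eq_bigr => i _; rewrite big_distrr.
have -> : n%:R + \sum_i \sum_j A i j = \sum_i \sum_j ((i == j)%:R + A i j).
  rewrite -[n in n%:R]card_ord -sum1_card natr_sum -big_split /=.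
  apply: eq_bigr => i _; rewrite big_split /=; congr (_ + _).
  by rewrite (bigD1 i) //= eqxx big1 ?addr0 // => j /negPf; rewrite eq_sym => ->.
rewrite expectr_sum => [|i]; last by apply: bounded_mfun_sum => j; exact: bounded_mfunM.
rewrite mulr_sumr; apply: ler_sum => i _.
rewrite expectr_sum => [|j]; last exact: bounded_mfunM.
by rewrite mulr_sumr; apply: ler_sum => j _; exact: GG.
Qed.

Lemma dependency_graph_indep_fun d (T : measurableType d) (R : realType)
    (P : probability T R) (X : nat -> T -> R) (V : set nat) (E : rel nat)
    (g k : R -> R) a b :
  dependency_graph P X V E -> measurable_fun setT g -> measurable_fun setT k ->
  V a -> V b -> a != b -> ~~ E a b -> indep_fun P (g \o X a) (k \o X b).
Proof.
move=> XVE mg mk Va Vb ab nEab C D mC mD.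
have gC := mg measurableT _ mC; have kD := mk measurableT _ mD.
rewrite setTI in gC; rewrite setTI in kD.
apply: (XVE [set a] [set b]).
- by move=> _ ->.
- by move=> _ ->.
- by apply/seteqP; split => // x [/= xa xb]; move: ab; rewrite -xa xb eqxx.
- by move=> i j /= -> ->.
- by apply: sub_sigma_algebra; exists a, (g @^-1` C); split.
- by apply: sub_sigma_algebra; exists b, (k @^-1` D); split.
Qed.

Section dependency_graph_sum.
Context d (T : measurableType d) (R : realType) (P : probability T R).
Variables (X : nat -> T -> R) (V : set nat) (E : rel nat) (n : nat)
  (lab : 'I_n -> nat).
Hypothesis mX : forall k, measurable_fun setT (X k).
Hypothesis XVE : dependency_graph P X V E.
Hypothesis lab_inj : injective lab.
Hypothesis labV : forall i, V (lab i).

(* Only pairs adjacent in the observed graph, or on the diagonal, can correlate. *)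
Lemma expectr_sqr_sum_dependency_le (g : 'I_n -> R -> R) (B b : R) :
  (forall i, measurable_fun setT (g i)) -> (forall i y, `|g i y| <= B) ->
  (forall i, expectr P (g i \o X (lab i)) = 0) ->
  (forall i j, expectr P (fun x => g i (X (lab i) x) * g j (X (lab j) x)) <= b) ->
  0 <= b ->
  expectr P (fun x => (\sum_i g i (X (lab i) x)) ^+ 2)
    <= b * (n%:R + \sum_i \sum_j adjmx R E lab i j).
Proof.
move=> mg gB g0 gg b0; have bG i := bounded_mfun_comp (mX (lab i)) (mg i) (gB i).
apply: (expectr_sqr_sum_le (G := fun i => g i \o X (lab i))) => // i j.
rewrite mxE; have [<-|ij] := eqVneq i j.
  rewrite mulrDr mulr1; apply: le_trans (gg i i) _.
  by rewrite lerDl mulr_ge0.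
rewrite add0r; case Eij: (E (lab i) (lab j)); first by rewrite mulr1; exact: gg.
have labij : lab i != lab j by apply: contra ij => /eqP/lab_inj ->.
rewrite mulr0 (expectr_indepM (bG i) (bG j)) ?g0 ?mul0r //.
by apply: (dependency_graph_indep_fun XVE) => //; rewrite Eij.
Qed.

End dependency_graph_sum.

Definition var_gap_bound (R : realType) (c1 c2 eps : R) : R :=
  let delta := eps / (1 + c2) in
  c1 ^+ 2 * (1 + c2) / (delta / 2) + c1 ^+ 4 * (1 + c2) / (delta ^+ 2 / 4).

Section fixed_sample_size.
Context d (T : measurableType d) (R : realType) (P : probability T R).
Variables (X : nat -> T -> R) (V : set nat) (E : rel nat) (n : nat)
  (lab : 'I_n -> nat) (c1 c2 eps : R).
Hypothesis mX : forall k, measurable_fun setT (X k).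
Hypothesis XVE : dependency_graph P X V E.
Hypothesis lab_inj : injective lab.
Hypothesis labV : forall i, V (lab i).
Hypothesis c1_ge0 : 0 <= c1.
Hypothesis c2_ge0 : 0 <= c2.
Hypothesis eps_gt0 : 0 < eps.
Hypothesis X_bounded :
  forall i, P [set w | c1 < `|X (lab i) w - mean_mu P n X lab|] = 0%E.
Hypothesis degree_le : forall i, \sum_j adjmx R E lab i j <= c2.
Hypothesis homoskedastic : forall i j, V i -> V j -> 'V_P[X i] = 'V_P[X j].
Hypothesis n_gt0 : (0 < n)%N.

Let n_neq0 : n%:R != 0 :> R. Proof. by rewrite pnatr_eq0 -lt0n. Qed.
Let n_gt0' : 0 < n%:R :> R. Proof. by rewrite ltr0n. Qed.

Let mu := mean_mu P n X lab.

(* [X i - mu] clipped to [[-c1, c1]]: it equals [X i - mu] almost surely and is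
   bounded everywhere, so the bounded-expectation calculus applies to it. *)
Let clip (y : R) : R := Num.max (- c1) (Num.min c1 (y - mu)).

Let measurable_clip : measurable_fun setT clip.
Proof.
by apply: measurable_maxr => //; apply: measurable_minr => //; exact: measurable_funB.
Qed.

Let norm_clip_le y : `|clip y| <= c1.
Proof.
rewrite /clip ler_norml le_max lexx ge_max ge_min lexx /=.
by rewrite lerNl (le_trans _ c1_ge0) // oppr_le0.
Qed.

Let clipE y : `|y - mu| <= c1 -> clip y = y - mu.
Proof. by rewrite ler_norml => /andP[h1 h2]; rewrite /clip (min_idPr h2) (max_idPr h1). Qed.

Let Z (i : 'I_n) : T -> R := clip \o X (lab i).

Let bounded_Z i : bounded_mfun (Z i).
Proof. exact: bounded_mfun_comp (mX _) measurable_clip norm_clip_le. Qed.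

Let outlier := \big[setU/set0]_(i < n) [set w | c1 < `|X (lab i) w - mu|].

Let measurable_outlier_i i : measurable [set w | c1 < `|X (lab i) w - mu|].
Proof.
by apply: measurable_superlevel; apply: measurableT_comp => //; exact: measurable_funB.
Qed.

Let measurable_outlier : measurable outlier.
Proof. by apply: bigsetU_measurable => i _; exact: measurable_outlier_i. Qed.

Let P_outlier : P outlier = 0%E.
Proof.
apply/(negligibleP _ measurable_outlier); rewrite /outlier.
elim/big_ind: _ => [|A B|i _]; [exact: negligible_set0 | exact: negligibleU |].
by apply/(negligibleP _ (measurable_outlier_i i)); exact: X_bounded.
Qed.

Let ZE w i : ~ outlier w -> Z i w = X (lab i) w - mu.
Proof.
move=> Nw; rewrite /Z /= clipE // leNgt; apply/negP => Xi; apply: Nw.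
by rewrite /outlier (bigD1 i) //=; left.
Qed.

Let m i := expectr P (Z i).

Let EX i : ('E_P[X (lab i)] = (m i + mu)%:E)%E.
Proof.
rewrite (expectation_ae_expectr (g := fun w => Z i w + cst mu w)
  measurable_outlier P_outlier (mX _)).
- by rewrite expectrD ?expectr_cst //; exact: bounded_mfun_cst.
- by apply: bounded_mfunD => //; exact: bounded_mfun_cst.
- by move=> w Nw; rewrite ZE //= subrK.
Qed.

(* [mu] is the average of the means [m i + mu]. *)
Let sum_m : \sum_i m i = 0.
Proof.
have : n%:R * mu = \sum_(i < n) (m i + mu).
  by rewrite /mu /mean_mu mulrA mulfV // mul1r; apply: eq_bigr => i _; rewrite EX.
rewrite big_split /= sumr_const card_ord mulr_natl => /eqP.
by rewrite eq_sym -subr_eq0 addrK => /eqP.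
Qed.

Let VX i : 'V_P[X (lab i)] = (expectr P (fun w => (Z i w - m i) ^+ 2))%:E.
Proof.
rewrite /variance unlock EX /=.
rewrite (expectation_ae_expectr (g := fun w => (Z i w - m i) ^+ 2)
  measurable_outlier P_outlier) //.
- by apply: measurable_funM; apply: measurable_funB.
- by apply: bounded_mfunM; apply: bounded_mfunB => //; exact: bounded_mfun_cst.
- move=> w Nw /=; rewrite ZE // expr2.
  change ((X (lab i) w - (m i + mu)) * (X (lab i) w - (m i + mu)) =
    (X (lab i) w - mu - m i) * (X (lab i) w - mu - m i)); ring.
Qed.

Let Zbar w := n%:R^-1 * \sum_i Z i w.

Let bounded_Zbar : bounded_mfun Zbar.
Proof. exact/bounded_mfunZ/bounded_mfun_sum. Qed.

Let XbarE w : ~ outlier w -> Xbar n X lab w = Zbar w + mu.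
Proof.
move=> Nw; rewrite /Xbar /Zbar.
under eq_bigr => i _ do rewrite -[X (lab i) w](subrK mu) -ZE //.
by rewrite big_split /= sumr_const card_ord mulrDr -[mu *+ n]mulr_natl mulKf.
Qed.

Let measurable_Xbar : measurable_fun setT (Xbar n X lab).
Proof. by apply: measurable_funM => //; exact: measurable_sum. Qed.

Let VXbar : 'V_P[Xbar n X lab] = (expectr P (fun w => Zbar w ^+ 2))%:E.
Proof.
have EXbar : ('E_P[Xbar n X lab] = mu%:E)%E.
  rewrite (expectation_ae_expectr (g := fun w => Zbar w + cst mu w)
    measurable_outlier P_outlier measurable_Xbar).
  - rewrite expectrD ?expectr_cst //; last exact: bounded_mfun_cst.
    rewrite expectrZ ?expectr_sum //; last exact: bounded_mfun_sum.
    by rewrite (sum_m : \sum_i expectr P (Z i) = 0) mulr0 add0r.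
  - by apply: bounded_mfunD => //; exact: bounded_mfun_cst.
  - by move=> w Nw; rewrite XbarE.
rewrite /variance unlock EXbar /=.
rewrite (expectation_ae_expectr (g := fun w => Zbar w ^+ 2)
  measurable_outlier P_outlier) //.
- by apply: measurable_funM; apply: measurable_funB.
- exact: bounded_mfunM.
- move=> w Nw /=.
  change ((Xbar n X lab w - mu) * (Xbar n X lab w - mu) = Zbar w ^+ 2).
  by rewrite XbarE // expr2 addrK.
Qed.

Let i0 : 'I_n := Ordinal n_gt0.
Let s2 := expectr P (fun w => (Z i0 w - m i0) ^+ 2).

Let Vs2 i : expectr P (fun w => (Z i w - m i) ^+ 2) = s2.
Proof. by have := homoskedastic (labV i) (labV i0); rewrite !VX => -[]. Qed.

Let SA := \sum_i \sum_j adjmx R E lab i j.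

Let norm_m_le i : `|m i| <= c1.
Proof. by apply: expectr_norm_le => // x; exact: norm_clip_le. Qed.

Let bounded_Zc i : bounded_mfun (fun x => Z i x - m i).
Proof. by apply: bounded_mfunB => //; exact: bounded_mfun_cst. Qed.

Let s2_ge0 : 0 <= s2.
Proof. by apply: expectr_ge0 => [|x]; [exact: bounded_mfunM | exact: sqr_ge0]. Qed.

(* The covariances of the centered [Z i] are bounded by the common variance
   [s2], by AM-GM. *)
Let expectr_Zbar2_le :
  expectr P (fun w => Zbar w ^+ 2) <= n%:R^-2 * (s2 * (n%:R + SA)).
Proof.
set g := fun (i : 'I_n) (y : R) => clip y - m i.
have -> : (fun w => Zbar w ^+ 2) = (fun w => n%:R^-2 * (\sum_i g i (X (lab i) w)) ^+ 2).
  apply/funext => w; rewrite /Zbar /g big_split /= sumrN.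
  by rewrite (sum_m : \sum_i m i = 0) subr0 exprMn exprVn.
rewrite expectrZ; last by apply: bounded_mfunM; exact: bounded_mfun_sum.
rewrite ler_pM2l ?invr_gt0 ?exprn_gt0 //.
apply: (expectr_sqr_sum_dependency_le mX XVE lab_inj labV (B := c1 + c1))
  => // [i|i y|i|i j].
- exact: measurable_funB.
- by apply: le_trans (ler_normB _ _) _; rewrite lerD.
- have -> : g i \o X (lab i) = fun x => Z i x - cst (m i) x by [].
  by rewrite expectrB ?expectr_cst ?subrr //; exact: bounded_mfun_cst.
- apply: le_trans (_ : _ <= expectr P (fun x =>
    2^-1 * ((Z i x - m i) ^+ 2 + (Z j x - m j) ^+ 2))) _.
    apply: ler_expectr => [||x]; first exact: bounded_mfunM (bounded_Zc i) (bounded_Zc j).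
      by apply: bounded_mfunZ; apply: bounded_mfunD; exact: bounded_mfunM.
    rewrite /g /Z /=; set a := clip _ - m i; set b := clip _ - m j.
    by have := sqr_ge0 (a - b); rewrite !expr2; nra.
  rewrite expectrZ; last by apply: bounded_mfunD; exact: bounded_mfunM.
  by rewrite expectrD ?Vs2; [lra | exact: bounded_mfunM..].
Qed.

Let q i := expectr P (fun w => Z i w ^+ 2).

Let bounded_Z2 i : bounded_mfun (fun w => Z i w ^+ 2).
Proof. exact: bounded_mfunM. Qed.

Let qE i : q i = s2 + m i ^+ 2.
Proof.
rewrite -(Vs2 i).
have -> : (fun w => (Z i w - m i) ^+ 2) =
    (fun w => Z i w ^+ 2 + (- (2 * m i) * Z i w + cst (m i ^+ 2) w)).
  by apply/funext => w /=; ring.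
rewrite expectrD //; last first.
  by apply: bounded_mfunD; [exact: bounded_mfunZ | exact: bounded_mfun_cst].
rewrite expectrD //; [|exact: bounded_mfunZ | exact: bounded_mfun_cst].
by rewrite expectrZ // expectr_cst -/(m i) -/(q i); ring.
Qed.

Let clip2_bounds y : 0 <= clip y ^+ 2 <= c1 ^+ 2.
Proof.
have := norm_clip_le y; rewrite ler_norml => /andP[h1 h2].
by rewrite sqr_ge0 /= !expr2; nra.
Qed.

Let q_bounds i : 0 <= q i <= c1 ^+ 2.
Proof.
apply/andP; split; first by apply: expectr_ge0 => // x; exact: sqr_ge0.
rewrite -[X in _ <= X](expectr_cst P); apply: ler_expectr => // [|x].
  exact: bounded_mfun_cst.
by have /andP[] := clip2_bounds (X (lab i) x).
Qed.

Let Q w := n%:R^-1 * \sum_i Z i w ^+ 2.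
Let EQ := n%:R^-1 * \sum_i q i.

Let bounded_Q : bounded_mfun Q.
Proof. exact/bounded_mfunZ/bounded_mfun_sum. Qed.

Let expectr_Q_dev_le :
  expectr P (fun w => (Q w - EQ) ^+ 2) <= n%:R^-2 * (c1 ^+ 2 * c1 ^+ 2 * (n%:R + SA)).
Proof.
set g := fun (i : 'I_n) (y : R) => clip y ^+ 2 - q i.
have g_le i y : `|g i y| <= c1 ^+ 2.
  have := clip2_bounds y; have := q_bounds i.
  by move=> /andP[h1 h2] /andP[h3 h4]; rewrite /g ler_norml; apply/andP; split; lra.
have bG i : bounded_mfun (fun x => Z i x ^+ 2 - q i).
  by apply: bounded_mfunB => //; exact: bounded_mfun_cst.
have -> : (fun w => (Q w - EQ) ^+ 2) =
    (fun w => n%:R^-2 * (\sum_i g i (X (lab i) w)) ^+ 2).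
  by apply/funext => w; rewrite /Q /EQ /g -mulrBr sumrB exprMn exprVn.
rewrite expectrZ; last by apply: bounded_mfunM; exact: bounded_mfun_sum.
rewrite ler_pM2l ?invr_gt0 ?exprn_gt0 //.
apply: (expectr_sqr_sum_dependency_le mX XVE lab_inj labV (B := c1 ^+ 2))
  => // [i|i|i j|].
- by apply: measurable_funB => //; exact: measurable_funM.
- have -> : g i \o X (lab i) = fun x => Z i x ^+ 2 - cst (q i) x by [].
  by rewrite expectrB ?expectr_cst ?subrr //; exact: bounded_mfun_cst.
- rewrite -[X in _ <= X](expectr_cst P); apply: ler_expectr => [||x].
  + exact: bounded_mfunM (bG i) (bG j).
  + exact: bounded_mfun_cst.
  + by apply: le_trans (ler_norm _) _; rewrite normrM ler_pM.
- by rewrite mulr_ge0 ?sqr_ge0.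
Qed.

Let Dn := 1 + n%:R^-1 * SA.

Let Dn_ge1 : 1 <= Dn.
Proof.
rewrite /Dn lerDl mulr_ge0 ?invr_ge0 ?ler0n //.
by apply: sumr_ge0 => i _; apply: sumr_ge0 => j _; rewrite mxE ler0n.
Qed.

Let Dn_le : Dn <= 1 + c2.
Proof.
rewrite /Dn lerD2l ler_pdivrMl // mulr_natl -[n in c2 *+ n]card_ord -sumr_const.
by apply: ler_sum => i _; exact: degree_le.
Qed.

Let sigma2_hatE w : ~ outlier w -> sigma2_hat n X lab w = Q w - Zbar w ^+ 2.
Proof.
move=> Nw; rewrite /sigma2_hat /Q.
have -> : \sum_i (X (lab i) w - Xbar n X lab w) ^+ 2 =
    \sum_i (Z i w ^+ 2 + (- (2 * Zbar w) * Z i w + Zbar w ^+ 2)).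
  by apply: eq_bigr => i _; rewrite XbarE // ZE //; ring.
have sumZ : \sum_i Z i w = n%:R * Zbar w by rewrite /Zbar mulrA mulfV // mul1r.
rewrite !big_split /= -mulr_sumr sumZ sumr_const card_ord -(mulr_natr (Zbar w ^+ 2)).
by field.
Qed.

Let nV2_hatE w : ~ outlier w ->
  n%:R * V2_hat n X lab (adjmx R E lab) w = (Q w - Zbar w ^+ 2) * Dn.
Proof. by move=> Nw; rewrite /V2_hat sigma2_hatE // -/SA -/Dn; field. Qed.

Let nEZbar2_le : n%:R * expectr P (fun w => Zbar w ^+ 2) <= s2 * Dn.
Proof.
have -> : s2 * Dn = n%:R * (n%:R^-2 * (s2 * (n%:R + SA))) by rewrite /Dn; field.
by apply: ler_wpM2l; [exact: ltW | exact: expectr_Zbar2_le].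
Qed.

Let s2_le_EQ : s2 <= EQ.
Proof.
rewrite /EQ ler_pdivlMl //.
have -> : n%:R * s2 = \sum_(i < n) s2 by rewrite sumr_const card_ord mulr_natl.
by apply: ler_sum => i _; rewrite qE lerDl sqr_ge0.
Qed.

Let expectr_Zbar2_le_div :
  expectr P (fun w => Zbar w ^+ 2) <= c1 ^+ 2 * (1 + c2) / n%:R.
Proof.
rewrite ler_pdivlMr // mulrC; apply: le_trans nEZbar2_le _.
have /andP[_ qc1] := q_bounds i0; rewrite qE in qc1.
apply: ler_pM => //; first exact: le_trans ler01 Dn_ge1.
by apply: le_trans qc1; rewrite lerDl sqr_ge0.
Qed.

Let expectr_Q_dev_le_div :
  expectr P (fun w => (Q w - EQ) ^+ 2) <= c1 ^+ 4 * (1 + c2) / n%:R.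
Proof.
apply: le_trans expectr_Q_dev_le _.
have -> : n%:R^-2 * (c1 ^+ 2 * c1 ^+ 2 * (n%:R + SA)) = c1 ^+ 4 * Dn / n%:R.
  by rewrite /Dn; field.
by rewrite ler_wpM2r ?invr_ge0 ?ler0n // ler_wpM2l ?exprn_ge0.
Qed.

Let delta := eps / (1 + c2).

Let delta_gt0 : 0 < delta.
Proof. by rewrite divr_gt0 // ltr_pwDl. Qed.

Let gap_subset :
  [set w | eps < n%:R * expectr P (fun w => Zbar w ^+ 2) -
                 n%:R * V2_hat n X lab (adjmx R E lab) w] `<=`
  ([set w | delta / 2 < Zbar w ^+ 2] `|` [set w | delta ^+ 2 / 4 < (Q w - EQ) ^+ 2])
  `|` outlier.
Proof.
move=> w /= gap; apply: contrapT => /not_orP[/not_orP[]].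
move=> /negP; rewrite -leNgt => Zbar_le /negP; rewrite -leNgt => Q_le Nw.
have Q_ge : EQ - Q w <= delta / 2.
  rewrite leNgt; apply/negP => Q_lt; move: Q_le; apply/negP; rewrite -ltNge.
  have -> : delta ^+ 2 / 4 = (delta / 2) ^+ 2 by field.
  by rewrite !expr2; nra.
move: gap; rewrite nV2_hatE //.
have Dn_ge0 : 0 <= Dn := le_trans ler01 Dn_ge1.
have : s2 * Dn <= EQ * Dn by rewrite ler_wpM2r.
have : (EQ - Q w + Zbar w ^+ 2) * Dn <= delta * Dn by rewrite ler_wpM2r //; lra.
have : delta * Dn <= eps.
  have <- : delta * (1 + c2) = eps by rewrite /delta divfK // gt_eqF // ltr_pwDl.
  by rewrite ler_wpM2l // ltW.
by have := nEZbar2_le; lra.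
Qed.

Let measurable_nV2_hat :
  measurable_fun setT (fun w => n%:R * V2_hat n X lab (adjmx R E lab) w).
Proof.
apply: measurable_funM => //; apply: measurable_funM => //; apply: measurable_funM => //.
apply: measurable_funM => //; apply: measurable_sum => i.
by apply: measurable_funX; exact: measurable_funB.
Qed.

Lemma prob_var_gap_le :
  (P [set w | n%:R%:E * 'V_P[Xbar n X lab] -
              (n%:R * V2_hat n X lab (adjmx R E lab) w)%:E > eps%:E]
   <= (var_gap_bound c1 c2 eps / n%:R)%:E)%E.
Proof.
rewrite VXbar; set gap := [set w | _].
have -> : gap = [set w | eps < n%:R * expectr P (fun w => Zbar w ^+ 2) -
                              n%:R * V2_hat n X lab (adjmx R E lab) w].
  by apply/seteqP; split => w; rewrite /gap /= -EFinM -EFinB lte_fin.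
have bZbar2 : bounded_mfun (fun w => Zbar w ^+ 2) by exact: bounded_mfunM.
have bQdev : bounded_mfun (fun w => (Q w - EQ) ^+ 2).
  by apply: bounded_mfunM; apply: bounded_mfunB => //; exact: bounded_mfun_cst.
set E1 := [set w | delta / 2 < Zbar w ^+ 2].
set E2 := [set w | delta ^+ 2 / 4 < (Q w - EQ) ^+ 2].
have mE1 : measurable E1 by apply: measurable_superlevel; case: bZbar2.
have mE2 : measurable E2 by apply: measurable_superlevel; case: bQdev.
apply: (@le_trans _ _ (P ((E1 `|` E2) `|` outlier))).
  apply: le_measure gap_subset; rewrite inE.
    by apply: measurable_superlevel; exact: measurable_funB.
  by apply: measurableU => //; exact: measurableU.
rewrite measureU0 //; last exact: measurableU.
apply: le_trans (measureU2 _ mE1 mE2) _.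
have [d2_gt0 d4_gt0] : 0 < delta / 2 /\ 0 < delta ^+ 2 / 4.
  by split; rewrite divr_gt0 ?exprn_gt0.
apply: le_trans (leeD (markov_expectr P bZbar2 d2_gt0 (fun w => sqr_ge0 _))
                      (markov_expectr P bQdev d4_gt0 (fun w => sqr_ge0 _))) _.
rewrite -EFinD lee_fin /var_gap_bound /= -/delta mulrDl.
have div_le a b c : 0 < c -> a <= b / n%:R -> a / c <= b / c / n%:R.
  by move=> c_gt0 ab; rewrite mulrAC ler_wpM2r // invr_ge0 ltW.
by rewrite lerD // div_le.
Qed.

End fixed_sample_size.

Unset Implicit Arguments.

Theorem proposition2 (d : measure_display) (T : measurableType d) (R : realType)
  (P : probability T R) (X : nat -> {RV P >-> R})
  (V : nat -> set nat) (E : nat -> rel nat) (lab : forall n, 'I_n -> nat)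
  (c1 c2 c3 : R) :
  (* the n-th graph G_n = (V n, E n) is a finite simple graph, and the graphs are nested *)
  (forall n, finite_set (V n)) ->
  (forall n, simple_graph (V n) (E n)) ->
  (forall n, V n `<=` V n.+1) ->
  (forall n i j, E n i j -> E n.+1 i j) ->
  (* G_n is a dependency graph for the X i *)
  (forall n, dependency_graph P (fun i => X i : T -> R) (V n) (E n)) ->
  (* n distinct observed vertices V_S in V n *)
  (forall n, injective (lab n)) ->
  (forall n (i : 'I_n), V n (lab n i)) ->
  (* asymptotic scaling assumption *)
  0 < c1 -> 0 < c2 -> 0 < c3 ->
  (forall n (i : 'I_n),
     P [set w | c1 < `| X (lab n i) w - mean_mu P n (fun k => X k : T -> R) (lab n) | ] = 0%E) ->
  (forall n (i : 'I_n),
     \sum_(j < n) adjmx R (E n) (lab n) i j <= c2) ->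
  ((fun n => (n%:R%:E * 'V_P[Xbar n (fun k => X k : T -> R) (lab n)])%E) @ \oo
     --> c3%:E) ->
  (* homoskedasticity *)
  (forall n i j, V n i -> V n j -> 'V_P[X i] = 'V_P[X j]) ->
  forall eps : R, 0 < eps ->
  (fun n => P [set w |
     (n%:R%:E * 'V_P[Xbar n (fun k => X k : T -> R) (lab n)]
      - (n%:R * V2_hat n (fun k => X k : T -> R) (lab n) (adjmx R (E n) (lab n)) w)%:E
      > eps%:E)%E]) @ \oo --> 0%E.
Proof.
move=> _ _ _ _ XVE lab_inj labV c1_gt0 c2_gt0 _ X_bounded degree_le _ homoskedastic
  eps eps_gt0.
have mX k : measurable_fun setT (X k : T -> R) by exact: measurable_funP.
rewrite -(cvg_shiftS _ (nbhs (0 : \bar R))%E).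
apply: (@squeeze_cvge _ _ _ _ (fun=> 0%E) _
  (fun k => (var_gap_bound c1 c2 eps * harmonic k)%:E)).
- apply: nearW => k /=; rewrite measure_ge0 /=.
  by apply: prob_var_gap_le; rewrite ?ltW //; exact: homoskedastic.
- exact: cvg_cst.
- apply: cvg_EFin; first exact: nearW.
  rewrite -(mulr0 (var_gap_bound c1 c2 eps)).
  by apply: cvgM; [exact: cvg_cst | exact: cvg_harmonic].
Qed.
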